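(* Let $\mathbf{A}$, $\mathbf{B}$, $\mathbf{C}$ be the commutative integral residuated chains described in the context, with $\mathbf{A}$ a subalgebra of both $\mathbf{B}$ and $\mathbf{C}$. There is no totally ordered residuated lattice $\mathbf{D}$ (not necessarily commutative nor integral) together with residuated-lattice embeddings $h\colon \mathbf{B}\to\mathbf{D}$ and $k\colon \mathbf{C}\to\mathbf{D}$ such that $h(a)=k(a)$ for all $a\in A$. In other words, the V-formation $(\mathbf{A},\mathbf{B},\mathbf{C},\iota_B,\iota_C)$, where $\iota_B,\iota_C$ are the inclusion maps, has no amalgam in the class of totally ordered residuated lattices.
   Context: A residuated lattice is an algebra $(L,\wedge,\vee,\cdot,\backslash,/,1)$ where $(L,\wedge,\vee)$ is a lattice, $(L,\cdot,1)$ is a monoid, and $xy\le z \iff y\le x\backslash z \iff x\le z/y$. It is integral if $1$ is the top element; commutative if $\cdot$ is commutative, in which case $x\backslash y=y/x$ is written $x\to y$; a chain if totally ordered. In a chain, $x\to y=\max\{z: xz\le y\}$, and in an integral chain $x\to y=1$ whenever $x\le y$. The algebras (all commutative, integral, totally ordered, with $1$ the multiplicative identity and top): - $\mathbf{A}$: universe $u<v<1$, $xy=\min(x,y)$, and $x\to y=1$ if $x\le y$, $x\to y=y$ otherwise. - $\mathbf{B}$: universe $u<b<v<1$, with $v\cdot v=v$, $v\cdot b=b$, $v\cdot u=u$, $b\cdot b=u$, $b\cdot u=u$, $u\cdot u=u$; residuals: $x\to y=1$ if $x\le y$, and $v\to b=b$, $v\to u=u$, $b\to u=b$. - $\mathbf{C}$: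 universe $u<d<c<v<1$, with $v\cdot v=v$, $v\cdot c=d$, $v\cdot d=d$, $v\cdot u=u$, $c\cdot c=c\cdot d=d\cdot d=u$, and $x\cdot u=u$ for all $x$; residuals: $x\to y=1$ if $x\le y$, and $v\to c=c$, $v\to d=c$, $v\to u=u$, $c\to d=v$, $c\to u=c$, $d\to u=c$. The set $\{u,v,1\}$ is the universe of a subalgebra of both $\mathbf{B}$ and $\mathbf{C}$, equal to $\mathbf{A}$. An embedding is an injective homomorphism in the signature $\{\wedge,\vee,\cdot,\backslash,/,1\}$. *)

From Stdlib Require Import Arith.

(** Residuated lattices, as algebras (L, meet, join, mul, ldiv, rdiv, one):
    (L, meet, join) is a lattice (given by the lattice identities),
    (L, mul, one) is a monoid, and
    x y <= z <-> y <= x \ z <-> x <= z / y,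
    where x <= y is defined by meet x y = x. *)
Record resLattice := ResLattice {
  carrier :> Type;
  rl_meet : carrier -> carrier -> carrier;
  rl_join : carrier -> carrier -> carrier;
  rl_mul  : carrier -> carrier -> carrier;
  rl_ldiv : carrier -> carrier -> carrier;
  rl_rdiv : carrier -> carrier -> carrier;
  rl_one  : carrier;
  rl_meetC : forall x y, rl_meet x y = rl_meet y x;
  rl_joinC : forall x y, rl_join x y = rl_join y x;
  rl_meetA : forall x y z, rl_meet x (rl_meet y z) = rl_meet (rl_meet x y) z;
  rl_joinA : forall x y z, rl_join x (rl_join y z) = rl_join (rl_join x y) z;
  rl_meetK : forall x y, rl_meet x (rl_join x y) = x;
  rl_joinK : forall x y, rl_join x (rl_meet x y) = x;
  rl_mulA  : forall x y z, rl_mul x (rl_mul y z) = rl_mul (rl_mul x y) z;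
  rl_mul1l : forall x, rl_mul rl_one x = x;
  rl_mul1r : forall x, rl_mul x rl_one = x;
  rl_res_l : forall x y z,
      rl_meet (rl_mul x y) z = rl_mul x y <-> rl_meet y (rl_ldiv x z) = y;
  rl_res_r : forall x y z,
      rl_meet (rl_mul x y) z = rl_mul x y <-> rl_meet x (rl_rdiv z y) = x
}.

Definition rl_le (L : resLattice) (x y : L) : Prop := rl_meet L x y = x.

Definition is_chain (L : resLattice) : Prop :=
  forall x y : L, rl_le L x y \/ rl_le L y x.

Definition rl_embedding (L M : resLattice) (h : L -> M) : Prop :=
  (forall x y, h x = h y -> x = y) /\
  (forall x y, h (rl_meet L x y) = rl_meet M (h x) (h y)) /\
  (forall x y, h (rl_join L x y) = rl_join M (h x) (h y)) /\
  (forall x y, h (rl_mul L x y) = rl_mul M (h x) (h y)) /\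
  (forall x y, h (rl_ldiv L x y) = rl_ldiv M (h x) (h y)) /\
  (forall x y, h (rl_rdiv L x y) = rl_rdiv M (h x) (h y)) /\
  h (rl_one L) = rl_one M.

Inductive B4 := Bu | Bb | Bv | B1.

Definition rkB (x : B4) : nat :=
  match x with Bu => 0 | Bb => 1 | Bv => 2 | B1 => 3 end.
Definition meetB (x y : B4) := if rkB x <=? rkB y then x else y.
Definition joinB (x y : B4) := if rkB x <=? rkB y then y else x.
Definition mulB (x y : B4) : B4 :=
  match x, y with
  | B1, z | z, B1 => z
  | Bv, Bv => Bv
  | Bv, Bb | Bb, Bv => Bb
  | Bb, Bb => Bu
  | _, _ => Bu
  end.
Definition impB (x y : B4) : B4 :=
  if rkB x <=? rkB y then B1 else
  match x, y with
  | Bv, Bb => Bb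
  | Bv, Bu => Bu
  | Bb, Bu => Bb
  | _, z => z   (* 1 -> z = z *)
  end.

Inductive C5 := Cu | Cd | Cc | Cv | C1.

Definition rkC (x : C5) : nat :=
  match x with Cu => 0 | Cd => 1 | Cc => 2 | Cv => 3 | C1 => 4 end.
Definition meetC (x y : C5) := if rkC x <=? rkC y then x else y.
Definition joinC (x y : C5) := if rkC x <=? rkC y then y else x.
Definition mulC (x y : C5) : C5 :=
  match x, y with
  | C1, z | z, C1 => z
  | Cv, Cv => Cv
  | Cv, Cc | Cc, Cv => Cd
  | Cv, Cd | Cd, Cv => Cd
  | _, _ => Cu
  end.
Definition impC (x y : C5) : C5 :=
  if rkC x <=? rkC y then C1 else
  match x, y with
  | Cv, Cc => Cc
  | Cv, Cd => Cc
  | Cv, Cu => Cu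
  | Cc, Cd => Cv
  | Cc, Cu => Cc
  | Cd, Cu => Cc
  | _, z => z   (* 1 -> z = z *)
  end.

Ltac fin_cases := intros; repeat match goal with
  | x : B4 |- _ => destruct x
  | x : C5 |- _ => destruct x end;
  cbv; try reflexivity; try (split; intro; congruence).

(** B and C as residuated lattices (commutative, so x\y = y/x = x -> y). *)
Definition B : resLattice.
Proof.
  refine (ResLattice B4 meetB joinB mulB impB (fun z y => impB y z) B1
            _ _ _ _ _ _ _ _ _ _ _); fin_cases.
Defined.

Definition C : resLattice.
Proof.
  refine (ResLattice C5 meetC joinC mulC impC (fun z y => impC y z) C1
            _ _ _ _ _ _ _ _ _ _ _); fin_cases.
Defined.


(** In an amalgam of B and C inside a chain D, write u, v, b, c, d for the
    images of the named elements.  We have b^2 = d^2 = u, and an element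
    y <= x with y \ x^2 = y must equal x.  Comparing b with c: if c <= b,
    then c \ u = c forces b = c, and v b = b, v c = d give c = d; if b <= c,
    then b <= v \ d forces v b = b <= d, then b \ u = b forces b = d, and
    v \ b = b, v \ d = c give c = d again.  But c <> d in C. *)

Section ResLatticeOrder.
Variable L : resLattice.

Lemma rl_le_refl (x : L) : rl_le L x x.
Proof. unfold rl_le. rewrite <- (rl_joinK L x x) at 2. apply rl_meetK. Qed.

Lemma rl_le_trans (x y z : L) : rl_le L x y -> rl_le L y z -> rl_le L x z.
Proof. unfold rl_le; intros Hxy Hyz. rewrite <- Hxy, <- rl_meetA, Hyz. reflexivity. Qed.

Lemma rl_le_antisym (x y : L) : rl_le L x y -> rl_le L y x -> x = y.
Proof. unfold rl_le; intros Hxy Hyx. rewrite <- Hxy, rl_meetC. exact Hyx. Qed.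

Lemma rl_mul_mono_l (x y z : L) :
  rl_le L x y -> rl_le L (rl_mul L x z) (rl_mul L y z).
Proof.
  intros Hxy. apply rl_res_r. apply (rl_le_trans _ y); [exact Hxy|].
  apply rl_res_r, rl_le_refl.
Qed.

Lemma rl_ldiv_sqr_fixed_eq (x y : L) :
  rl_le L y x -> rl_ldiv L y (rl_mul L x x) = y -> x = y.
Proof.
  intros Hyx Hfix. apply rl_le_antisym; [|exact Hyx].
  rewrite <- Hfix. apply rl_res_l, rl_mul_mono_l, Hyx.
Qed.

End ResLatticeOrder.

Section AmalgamConfiguration.
Variables (D : resLattice) (u v b c d : D).
Hypothesis chainD : is_chain D.
Hypotheses (bb : rl_mul D b b = u) (vb : rl_mul D v b = b)
           (v_ldiv_b : rl_ldiv D v b = b) (b_ldiv_u : rl_ldiv D b u = b).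
Hypotheses (dd : rl_mul D d d = u) (vc : rl_mul D v c = d)
           (v_ldiv_d : rl_ldiv D v d = c) (c_ldiv_u : rl_ldiv D c u = c).

Lemma amalgam_configuration_collapse : c = d.
Proof.
  destruct (chainD b c) as [Hbc | Hcb].
  - assert (Hbd : rl_le D b d).
    { rewrite <- vb. apply rl_res_l. rewrite v_ldiv_d. exact Hbc. }
    assert (Edb : d = b).
    { apply rl_ldiv_sqr_fixed_eq; [exact Hbd|]. rewrite dd. exact b_ldiv_u. }
    rewrite <- v_ldiv_d, Edb. exact v_ldiv_b.
  - assert (Ebc : b = c).
    { apply rl_ldiv_sqr_fixed_eq; [exact Hcb|]. rewrite bb. exact c_ldiv_u. }
    rewrite <- vc, <- Ebc. symmetry. exact vb.
Qed.

End AmalgamConfiguration.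

Theorem mainTheorem1 :
  ~ exists (D : resLattice) (h : B -> D) (k : C -> D),
      is_chain D /\ rl_embedding B D h /\ rl_embedding C D k /\
      h Bu = k Cu /\ h Bv = k Cv /\ h B1 = k C1.
Proof.
  intros [D [h [k [chainD [[_ [_ [_ [hmul [hldiv _]]]]]
     [[kinj [_ [_ [kmul [kldiv _]]]]] [hu [hv _]]]]]]]].
  assert (Ecd : k Cc = k Cd).
  { apply (amalgam_configuration_collapse D (k Cu) (k Cv) (h Bb)); trivial.
    - rewrite <- hu, <- hmul. reflexivity.
    - rewrite <- hv, <- hmul. reflexivity.
    - rewrite <- hv, <- hldiv. reflexivity.
    - rewrite <- hu, <- hldiv. reflexivity.
    - rewrite <- kmul. reflexivity.
    - rewrite <- kmul. reflexivity.
    - rewrite <- kldiv. reflexivity.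
    - rewrite <- kldiv. reflexivity. }
  apply kinj in Ecd. discriminate.
Qed.
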